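(* Let $\mu^\diamond\in\mathrm{Meas}(\mathcal X)$ be a tomographically complete measurement with finite outcome set $\mathcal Y$. Then for every finite quantum score $S$ on $\mathcal X$ there exists a quantum score $S^\diamond=(s^\diamond,\mu^{\mathrm c})$ with constant measurement function $\mu^{\mathrm c}(\rho)=\mu^\diamond$ for all $\rho$, such that $S^\diamond(\rho';\rho)=S(\rho';\rho)$ for all $\rho,\rho'\in\mathrm{Dens}(\mathcal X)$.
   Context: Let $\mathcal X=\mathbb C^n$, $\mathrm{Herm}(\mathcal X)$ the Hermitian matrices with $\langle X,Y\rangle=\mathrm{Tr}(X^*Y)$, $\mathrm{Pos}(\mathcal X)$ the positive semidefinite ones, $\mathrm{Dens}(\mathcal X)$ the trace-one elements of $\mathrm{Pos}(\mathcal X)$. A measurement with finite outcome set $\mathcal Y\subseteq\mathbb N$ is $\mu=\{\mu_y\}_{y\in\mathcal Y}\subseteq\mathrm{Pos}(\mathcal X)$ with $\sum_y\mu_y=I$; it is tomographically complete if the real span of $\{\mu_y\}$ is $\mathrm{Herm}(\mathcal X)$. A quantum score is $S=(s,\mu)$ with $s:\mathrm{Dens}(\mathcal X)\times\mathbb N\to\mathbb R\cup\{\pm\infty\}$, $\mu:\mathrm{Dens}(\mathcal X)\to\mathrm{Meas}(\mathcal X)$ (outcome set $\mathcal Y(\rho')$ of $\mu(\rho')$), with expected score $S(\rho';\rho)=\sum_{y\in\mathcal Y(\rho')}\langle\mu(\rho')_y,\rho\rangle s(\rho',y)$. $S$ is finite if $s$ takes only real values. *)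

From HB Require Import structures.
From mathcomp Require Import all_boot all_order all_algebra.
From mathcomp Require Import complex.
From mathcomp Require Import reals constructive_ereal.
Set Implicit Arguments.
Unset Strict Implicit.
Unset Printing Implicit Defensive.
Import Order.TTheory GRing.Theory Num.Theory.
Local Open Scope ring_scope.
Local Open Scope sesquilinear_scope.

Section QScores.
Variables (R : realType) (n : nat).
Local Notation C := R[i].
Local Notation mat := 'M[C]_n.

Definition herm (X : mat) : Prop := X ^t* = X.

Definition hs_inner (X Y : mat) : C := \tr (X ^t* *m Y).

Definition psd (X : mat) : Prop :=
  herm X /\ forall v : 'rV[C]_n, 0 <= (v *m X *m v ^t*) 0 0.

Definition is_dens (X : mat) : Prop := psd X /\ \tr X = 1.
Definition dens := {rho : mat | is_dens rho}.

Record meas := Meas {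
  outcomes : seq nat;
  effect : nat -> mat;
  outcomes_uniq : uniq outcomes;
  effect_psd : forall y, y \in outcomes -> psd (effect y);
  effect_sum : \sum_(y <- outcomes) effect y = 1%:M }.

Definition tomo_complete (mu : meas) : Prop :=
  forall H : mat,
    herm H <-> exists c : nat -> R,
      H = \sum_(y <- outcomes mu) ((c y)%:C)%C *: effect mu y.

Record qscore := QScore {
  qs_s : dens -> nat -> \bar R;
  qs_mu : dens -> meas }.

Definition qs_finite (S : qscore) : Prop :=
  forall rho' y, exists r : R, qs_s S rho' y = r%:E.

(* Expected score S(rho'; rho) = sum_{y in Y(rho')} <mu(rho')_y, rho> s(rho', y).
   The inner product is real (Hermitian arguments); we take its real part. *)
Definition expected_score (S : qscore) (rho' rho : dens) : \bar R :=
  (\sum_(y <- outcomes (qs_mu S rho'))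
     ((complex.Re (hs_inner (effect (qs_mu S rho') y) (proj1_sig rho)))%:E
        * qs_s S rho' y))%E.

End QScores.

From HB Require Import structures.
From mathcomp Require Import all_boot all_order all_algebra.
From mathcomp Require Import complex.
From mathcomp Require Import reals constructive_ereal.
From Stdlib Require Import ClassicalEpsilon.
Set Implicit Arguments.
Unset Strict Implicit.
Unset Printing Implicit Defensive.
Import Order.TTheory GRing.Theory Num.Theory.
Local Open Scope ring_scope.
Local Open Scope sesquilinear_scope.

(* A finite score at the guess rho' is the same data as the Hermitian operator
   A(rho') = sum_y s(rho', y) mu(rho')_y, since S(rho'; rho) = Re <A(rho'), rho>.
   Tomographic completeness expands A(rho') as sum_y c(rho', y) mu_y over the
   fixed measurement, and s := c gives the same expected scores. *)

Lemma Re_sum (R : rcfType) (I : Type) (s : seq I) (F : I -> R[i]) :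
  complex.Re (\sum_(i <- s) F i) = \sum_(i <- s) complex.Re (F i).
Proof. exact: (raddf_sum (@complex.Re R : Rcomplex R -> R)). Qed.

Lemma Re_realM (R : rcfType) (r : R) (z : R[i]) :
  complex.Re ((r%:C)%C * z) = r * complex.Re z.
Proof. by case: z => x y /=; rewrite mul0r subr0. Qed.

Section ScoreOperator.
Variables (R : realType) (n : nat).
Local Notation C := R[i].
Local Notation mat := 'M[C]_n.

Lemma hs_inner_suml (I : Type) (s : seq I) (F : I -> mat) (Z : mat) :
  hs_inner (\sum_(i <- s) F i) Z = \sum_(i <- s) hs_inner (F i) Z.
Proof. by rewrite /hs_inner raddf_sum map_mx_sum mulmx_suml raddf_sum. Qed.

Lemma hs_inner_realZl (r : R) (X Z : mat) :
  hs_inner ((r%:C)%C *: X) Z = (r%:C)%C * hs_inner X Z.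
Proof.
rewrite /hs_inner linearZ /= map_mxZ -scalemxAl mxtraceZ.
by congr (_ * _); apply: conjc_real.
Qed.

Lemma herm0 : herm (0 : mat).
Proof. by rewrite /herm linear0 map_mx0. Qed.

Lemma hermD (X Y : mat) : herm X -> herm Y -> herm (X + Y).
Proof. by rewrite /herm linearD /= map_mxD => -> ->. Qed.

Lemma herm_realZ (r : R) (X : mat) : herm X -> herm ((r%:C)%C *: X).
Proof.
rewrite /herm linearZ /= map_mxZ => ->.
by congr (_ *: _); apply: conjc_real.
Qed.

Lemma herm_real_sum (I : eqType) (s : seq I) (f : I -> R) (E : I -> mat) :
  (forall i, i \in s -> herm (E i)) -> herm (\sum_(i <- s) ((f i)%:C)%C *: E i).
Proof.
move=> hermE; rewrite big_seq; apply: (big_ind (@herm R n)) => [|X Y|i si].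
- exact: herm0.
- exact: hermD.
- exact/herm_realZ/hermE.
Qed.

Lemma effect_herm (mu : meas R n) y : y \in outcomes mu -> herm (effect mu y).
Proof. by case/(effect_psd (m:=mu)). Qed.

Definition score_operator (mu : meas R n) (f : nat -> R) : mat :=
  \sum_(y <- outcomes mu) ((f y)%:C)%C *: effect mu y.

Lemma herm_score_operator (mu : meas R n) (f : nat -> R) :
  herm (score_operator mu f).
Proof. by apply: herm_real_sum => y; apply: effect_herm. Qed.

Lemma Re_hs_inner_score_operator (mu : meas R n) (f : nat -> R) (Z : mat) :
  complex.Re (hs_inner (score_operator mu f) Z)
  = \sum_(y <- outcomes mu) complex.Re (hs_inner (effect mu y) Z) * f y.
Proof.
rewrite hs_inner_suml Re_sum; apply: eq_bigr => y _.
by rewrite hs_inner_realZl Re_realM mulrC.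
Qed.

Lemma expected_score_real (S : qscore R n) (rho' rho : dens R n) (f : nat -> R) :
  (forall y, qs_s S rho' y = (f y)%:E) ->
  expected_score S rho' rho
  = (complex.Re (hs_inner (score_operator (qs_mu S rho') f) (proj1_sig rho)))%:E.
Proof.
move=> sE; rewrite Re_hs_inner_score_operator -sumEFin /expected_score.
by apply: eq_bigr => y _; rewrite sE EFinM.
Qed.

Lemma tomo_complete_score_operator (mu0 mu : meas R n) (f : nat -> R) :
  tomo_complete mu0 -> exists c : nat -> R,
    score_operator mu f = score_operator mu0 c.
Proof. by move=> tc; apply/(tc _).1/herm_score_operator. Qed.

End ScoreOperator.

Theorem proposition3p4 (R : realType) (n : nat) (mu0 : meas R n) :
  tomo_complete mu0 ->
  forall S : qscore R n, qs_finite S ->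
  exists sd : dens R n -> nat -> \bar R,
    forall rho' rho : dens R n,
      expected_score (QScore sd (fun _ => mu0)) rho' rho
      = expected_score S rho' rho.
Proof.
move=> tc S Sfin.
have /choice[f fE] : forall rho', exists g : nat -> R,
    forall y, qs_s S rho' y = (g y)%:E.
  by move=> rho'; move/choice: (Sfin rho').
have /choice[c cE] : forall rho', exists g : nat -> R,
    score_operator (qs_mu S rho') (f rho') = score_operator mu0 g.
  by move=> rho'; apply: tomo_complete_score_operator.
exists (fun rho' y => (c rho' y)%:E) => rho' rho.
rewrite [RHS](expected_score_real rho (fE rho')) cE.
by rewrite [LHS](expected_score_real (f := c rho') rho).
Qed.
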